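(* If $r$ divides $s$, then $\nu(n,P^{(r)}_s)\ge\left(\left(\frac{r}{s}\right)^r+o(1)\right)\binom{n}{r}$, where $o(1)\to0$ as $n\to\infty$ with $r,s$ fixed.
   Context: $K^{(r)}_n$ is the ordered complete $r$-uniform hypergraph on $[n]=\{1,\dots,n\}$ with its natural order; a copy of an ordered hypergraph $H$ in $K^{(r)}_n$ is the image of $H$ under an order-preserving injection $V(H)\to[n]$. The natural path $P^{(r)}_s$ has vertices $v_1<\dots<v_s$ and edges all sets of $r$ consecutive vertices $\{v_j,\dots,v_{j+r-1}\}$, $1\le j\le s-r+1$. $\nu(n,H)$ is the maximum number of pairwise edge-disjoint copies of $H$ in $K^{(r)}_n$. *)

From mathcomp Require Import all_boot all_order all_algebra.
Set Implicit Arguments. Unset Strict Implicit. Unset Printing Implicit Defensive.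

(* An ordered hypergraph on vertex set 'I_k (with the natural order) is given
   by its edge set E : {set {set 'I_k}}. *)

Definition order_preserving (k n : nat) (f : 'I_k -> 'I_n) : bool :=
  [forall i : 'I_k, forall j : 'I_k, (i < j) ==> (f i < f j)].

Definition img_edges (k n : nat) (f : 'I_k -> 'I_n) (E : {set {set 'I_k}})
  : {set {set 'I_n}} := [set f @: (e : {set 'I_k}) | e in E].

Definition is_copy (k n : nat) (E : {set {set 'I_k}}) (C : {set {set 'I_n}})
  : bool := [exists f : {ffun 'I_k -> 'I_n}, order_preserving f && (C == img_edges f E)].

Definition is_packing (k n : nat) (E : {set {set 'I_k}})
  (P : {set {set {set 'I_n}}}) : bool :=
  [forall C in P, is_copy E C] && trivIset P.

Definition nu (k n : nat) (E : {set {set 'I_k}}) : nat :=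
  \max_(P : {set {set {set 'I_n}}} | is_packing E P) #|P|.

Definition natural_path (r s : nat) : {set {set 'I_s}} :=
  [set [set i : 'I_s | (j <= i) && (i < j + r)] | j : 'I_s & j + r <= s].

From mathcomp Require Import all_boot all_order all_algebra zify lra.
Import Order.TTheory GRing.Theory Num.Theory.
Set Implicit Arguments. Unset Strict Implicit. Unset Printing Implicit Defensive.

(* Let m = s/r and q = n %/ m.  An r-subset A = {a_0 < ... < a_(r-1)} of [q]
   gives a copy of the path whose vertex t*r + i (i < r) is sent to
   a_i + t*q.  Any r consecutive path vertices cover every residue mod r, so
   every edge of this copy reduces mod q to exactly A: the copies for distinct
   A are edge-disjoint, and nu(n, P) >= C(n %/ m, r), which is
   ((1/m)^r + o(1)) C(n, r). *)

Lemma copy_neq0 k n (E : {set {set 'I_k}}) (C : {set {set 'I_n}}) :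
  E != set0 -> is_copy E C -> C != set0.
Proof. by move=> E_neq0 /existsP[f /andP[_ /eqP->]]; rewrite imset_eq0. Qed.

Lemma card_le_nu (T : finType) k n (E : {set {set 'I_k}}) (D : {set T})
    (C : T -> {set {set 'I_n}}) (tag : {set 'I_n} -> T) :
    E != set0 -> {in D, forall i, is_copy E (C i)} ->
    {in D, forall i, {in C i, forall e, tag e = i}} ->
  #|D| <= nu n E.
Proof.
move=> E_neq0 copyC tagC.
have C_inj : {in D &, injective C}.
  move=> i j Di Dj eqC; have /set0Pn[e Ce] := copy_neq0 E_neq0 (copyC i Di).
  by rewrite -(tagC i Di e Ce) (tagC j Dj) // -eqC.
have packP : is_packing E (C @: D).
  apply/andP; split; first by apply/forall_inP => _ /imsetP[i Di ->]; exact: copyC.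
  apply/trivIsetP => _ _ /imsetP[i Di ->] /imsetP[j Dj ->] neqC.
  rewrite -setI_eq0; apply/set0Pn => -[e /setIP[Cie Cje]]; case/eqP: neqC.
  by rewrite -(tagC i Di e Cie) -(tagC j Dj e Cje).
by rewrite -(card_in_imset C_inj); apply: leq_bigmax_cond packP.
Qed.

Definition nth_elem q (A : {set 'I_q}) (i : nat) : nat :=
  nth 0 [seq val x | x <- enum A] i.

Section NthElem.

Variables (q : nat) (A : {set 'I_q}).

Lemma size_enum_val : size [seq val x | x <- enum A] = #|A|.
Proof. by rewrite size_map cardE. Qed.

Lemma nth_elem_lt i : i < #|A| -> nth_elem A i < q.
Proof.
rewrite /nth_elem -size_enum_val => /(mem_nth 0) /mapP[x _ ->]; exact: ltn_ord.
Qed.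

Lemma sorted_enum_val : sorted ltn [seq val x | x <- enum A].
Proof.
rewrite sorted_map /enum_mem -enumT; apply: sorted_filter.
  by move=> ???; apply: ltn_trans.
by rewrite -sorted_map val_enum_ord iota_ltn_sorted.
Qed.

Lemma ltn_nth_elem i j : i < j -> j < #|A| -> nth_elem A i < nth_elem A j.
Proof.
move=> lt_ij lt_jA; have lt_iA := ltn_trans lt_ij lt_jA.
by apply: (sorted_ltn_nth ltn_trans 0 sorted_enum_val); rewrite ?inE ?size_enum_val.
Qed.

Lemma nth_elemP (x : 'I_q) :
  reflect (exists2 i, i < #|A| & nth_elem A i = x) (x \in A).
Proof.
rewrite -mem_enum -(mem_map val_inj); apply: (iffP idP) => [xA | [i iA ix]].
  exists (index (val x) [seq val x | x <- enum A]); last exact: nth_index.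
  by rewrite -size_enum_val index_mem.
by rewrite (_ : val x = nth_elem A i) // mem_nth // size_enum_val.
Qed.

End NthElem.

Lemma ltn_mixed_radix q a b t u : a < q -> t < u -> a + t * q < b + u * q.
Proof. by move=> lt_aq lt_tu; have := leq_mul2r q t.+1 u; rewrite lt_tu orbT mulSn; lia. Qed.

Lemma mod_window j r t : t < r -> exists2 i, j <= i < j + r & i %% r = t.
Proof.
move=> lt_tr; have r_gt0 : 0 < r by apply: leq_ltn_trans lt_tr.
have := divn_eq j r; have := ltn_pmod j r_gt0.
case: (leqP (j %% r) t) => [le_jt | lt_tj].
  exists (j %/ r * r + t); last by rewrite modnMDl modn_small.
  by apply/andP; split; lia.
exists ((j %/ r).+1 * r + t); last by rewrite modnMDl modn_small.
by rewrite mulSn; apply/andP; split; lia.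
Qed.

Lemma natural_path_neq0 r s : 0 < r <= s -> natural_path r s != set0.
Proof.
case/andP=> r_gt0 le_rs; apply/set0Pn; eexists; apply/imsetP.
by exists (Ordinal (leq_trans r_gt0 le_rs)); rewrite ?inE.
Qed.

Definition residues q {n} (e : {set 'I_n}) : {set 'I_q} :=
  [set x : 'I_q | [exists y in e, y %% q == x]].

Section PathCopy.

Variables (r s q n : nat) (A : {set 'I_q}).
Hypotheses (r_gt0 : 0 < r) (r_dvd_s : r %| s) (cardA : #|A| = r)
  (copies_fit : s %/ r * q <= n.+1).

(* The codomain is 'I_n.+1 only so that [inord] can be used; under
   [copies_fit] no value is truncated (path_copy_mapE). *)
Definition path_copy_map : {ffun 'I_s -> 'I_n.+1} :=
  [ffun k : 'I_s => inord (nth_elem A (k %% r) + k %/ r * q)].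

Lemma nth_elem_mod_lt k : nth_elem A (k %% r) < q.
Proof. by apply: nth_elem_lt; rewrite cardA ltn_pmod. Qed.

Lemma path_copy_mapE (k : 'I_s) :
  val (path_copy_map k) = nth_elem A (k %% r) + k %/ r * q.
Proof.
rewrite ffunE /= inordK //; apply: leq_trans copies_fit.
have lt_k_s : k %/ r < s %/ r by rewrite ltn_divLR // divnK.
by have := ltn_mixed_radix 0 (nth_elem_mod_lt k) lt_k_s; lia.
Qed.

Lemma path_copy_map_mono : order_preserving path_copy_map.
Proof.
apply/forallP => i; apply/forallP => j; apply/implyP => lt_ij.
rewrite -[_ < _]/(val _ < val _) !path_copy_mapE.
have [lt_div | eq_div] : i %/ r < j %/ r \/ i %/ r = j %/ r
  by have := leq_div2r r (ltnW lt_ij); lia.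
  exact: ltn_mixed_radix (nth_elem_mod_lt i) lt_div.
rewrite eq_div ltn_add2r ltn_nth_elem ?cardA ?ltn_pmod //.
by have := divn_eq i r; have := divn_eq j r; lia.
Qed.

Lemma residues_path_copy e :
  e \in img_edges path_copy_map (natural_path r s) -> residues q e = A.
Proof.
case/imsetP=> _ /imsetP[j /[!inE] le_jr_s ->] ->.
apply/setP => x; rewrite inE; apply/existsP/nth_elemP.
  case=> _ /andP[/imsetP[k _ ->] /eqP <-].
  exists (k %% r); first by rewrite cardA ltn_pmod.
  by rewrite path_copy_mapE addnC modnMDl (modn_small (nth_elem_mod_lt _)).
case=> t /[!cardA] lt_tr eq_tx.
have [k /andP[le_jk lt_k] mod_k] := mod_window j lt_tr.
have lt_ks : k < s by lia.
exists (path_copy_map (Ordinal lt_ks)); apply/andP; split.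
  by apply/imsetP; exists (Ordinal lt_ks); rewrite ?inE /= ?le_jk.
rewrite path_copy_mapE addnC modnMDl (modn_small (nth_elem_mod_lt _)) /=.
by rewrite mod_k eq_tx.
Qed.

End PathCopy.

Lemma bin_le_nu_natural_path r s n :
  0 < r -> r %| s -> 'C(n %/ (s %/ r), r) <= nu n (natural_path r s).
Proof.
move=> r_gt0 r_dvd_s; case: n => [|n]; first by rewrite div0n bin0n eqn0Ngt r_gt0.
set q := n.+1 %/ _; have [->|q_gt0] := posnP q; first by rewrite bin0n eqn0Ngt r_gt0.
have s_gt0 : 0 < s by case: s @q q_gt0 {r_dvd_s} => //; rewrite div0n divn0.
have copies_fit : s %/ r * q <= n.+1 by rewrite mulnC leq_divM.
rewrite -[q in 'C(q, r)]card_ord -card_draws.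
apply: (card_le_nu (tag := residues q)
  (C := fun A => img_edges (path_copy_map r s n A) (natural_path r s))).
- by rewrite natural_path_neq0 // r_gt0 dvdn_leq.
- move=> A /[!inE] /eqP cardA; apply/existsP.
  by exists (path_copy_map r s n A); rewrite path_copy_map_mono //=.
- by move=> A /[!inE] /eqP cardA e; apply: residues_path_copy.
Qed.

Lemma ffact_le_expn n k : n ^_ k <= n ^ k.
Proof.
rewrite ffact_prod -[k in n ^ k]card_ord -prod_nat_const.
by apply: leq_prod => i _; apply: leq_subr.
Qed.

Lemma expn_subn_le_ffact n k : (n - k) ^ k <= n ^_ k.
Proof.
rewrite ffact_prod -[k in _ ^ k]card_ord -prod_nat_const.
by apply: leq_prod => i _; apply/leq_sub2l/ltnW.
Qed.

Local Open Scope ring_scope.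

Lemma subrXX_le (R : numDomainType) (x y : R) n :
  0 <= y -> y <= x -> x ^+ n - y ^+ n <= n%:R * (x - y) * x ^+ n.-1.
Proof.
move=> y_ge0 le_yx; have x_ge0 := le_trans y_ge0 le_yx.
rewrite subrXX [n%:R * _]mulrC -mulrA; apply: ler_wpM2l; first by rewrite subr_ge0.
rewrite -[n in n%:R]card_ord mulr_natl -sumr_const; apply: ler_sum => i _.
rewrite -[in leRHS](subnK (_ : (i <= n.-1)%N)); last by have := ltn_ord i; lia.
by rewrite exprD ler_wpM2l ?exprn_ge0 // lerXn2r ?nnegrE.
Qed.

Lemma divn_expr_gap (R : realFieldType) (m n r : nat) : (0 < m)%N ->
  (n%:R / m%:R) ^+ r - (n %/ m - r)%:R ^+ r <= (r * r.+1)%:R * n%:R ^+ r.-1 :> R.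
Proof.
move=> m_gt0; set x : R := n%:R / m%:R; set q := (n %/ m)%N; set y : R := (q - r)%:R.
have m_gt0' : 0 < m%:R :> R by rewrite ltr0n.
have le_qx : q%:R <= x by rewrite ler_pdivlMr // -natrM ler_nat leq_divM.
have lt_xq : x < q%:R + 1 by rewrite natr1 ltr_pdivrMr // -natrM ltr_nat ltn_ceil.
have le_xn : x <= n%:R by rewrite ler_pdivrMr // ler_peMr // ler1n.
have y_ge0 : 0 <= y := ler0n _ _.
have le_yx : y <= x by apply: le_trans le_qx; rewrite ler_nat leq_subr.
have x_ge0 : 0 <= x := le_trans y_ge0 le_yx.
have gap : x - y <= r%:R + 1.
  have : q%:R <= y + r%:R by rewrite -natrD ler_nat; lia.
  by lra.
apply: le_trans (subrXX_le _ y_ge0 le_yx) _.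
rewrite natrM -!mulrA; apply: ler_wpM2l; first exact: ler0n.
by apply: ler_pM; rewrite ?subr_ge0 ?exprn_ge0 -?natr1 // lerXn2r ?nnegrE ?ler0n.
Qed.

Lemma bin_divn_asymptotic (R : archiRealFieldType) (m r : nat) (eps : R) :
  (0 < m)%N -> 0 < eps ->
  exists N, forall n, (N <= n)%N ->
    (m%:R^-1 ^+ r - eps) * 'C(n, r)%:R <= 'C(n %/ m, r)%:R.
Proof.
move=> m_gt0 eps_gt0; exists (Num.bound ((r * r.+1)%:R / eps)) => n le_Nn.
have n_large : (r * r.+1)%:R <= eps * n%:R.
  rewrite mulrC -ler_pdivrMr //; apply/ltW; apply: lt_le_trans (archi_boundP _) _.
    by rewrite divr_ge0 ?ler0n ?ltW.
  by rewrite ler_nat.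
set a := _ - eps; have [a_lt0 | a_ge0] := ltP a 0.
  by apply: (@le_trans _ _ 0); rewrite ?mulr_le0_ge0 ?ler0n ?(ltW a_lt0).
have fact_gt0 : 0 < (r`!)%:R :> R by rewrite ltr0n fact_gt0.
rewrite -(ler_pM2r fact_gt0) -mulrA -!natrM !bin_ffact.
apply: le_trans (_ : a * (n ^ r)%N%:R <= _).
  by rewrite ler_wpM2l // ler_nat ffact_le_expn.
apply: (@le_trans _ _ ((n %/ m - r)%N%:R ^+ r)); last first.
  by rewrite -natrX ler_nat expn_subn_le_ffact.
have tail_small : (r * r.+1)%:R * n%:R ^+ r.-1 <= eps * n%:R ^+ r :> R.
  case: r {a a_ge0 fact_gt0 le_Nn} n_large => [|r'] n_large.
    by rewrite mul0r expr0 mulr1 ltW.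
  by rewrite exprS mulrA ler_wpM2r ?exprn_ge0.
have := divn_expr_gap R n r m_gt0.
rewrite /a natrX mulrBl -exprMn [_ * n%:R]mulrC.
lra.
Qed.

Theorem proposition3p1 (r s : nat) (hr : (0 < r)%N) (hs : (0 < s)%N)
  (hrs : (r %| s)%N) :
  forall eps : rat, 0 < eps ->
  exists N : nat, forall n : nat, (N <= n)%N ->
    ((r%:R / s%:R) ^+ r - eps) * ('C(n, r))%:R
      <= (nu n (natural_path r s))%:R :> rat.
Proof.
move=> eps eps_gt0; have m_gt0 : (0 < s %/ r)%N by rewrite divn_gt0 // dvdn_leq.
have -> : r%:R / s%:R = (s %/ r)%:R^-1 :> rat.
  rewrite -{1}(divnK hrs) natrM invfM mulrCA mulfV ?mulr1 //.
  by rewrite pnatr_eq0 -lt0n.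
have [N large_N] := bin_divn_asymptotic r m_gt0 eps_gt0.
exists N => n /large_N /le_trans; apply.
by rewrite ler_nat bin_le_nu_natural_path.
Qed.
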